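(* Let $\mathcal{G}=(\mathcal{V},\mathcal{E})$ be a finite graph and $x\in(0,\infty)^{\mathcal{V}}$ with $$\min_{\mathcal{G}'\subseteq\mathcal{G}}\mathfrak{K}_{\mathcal{G}'}(x|_{\mathcal{G}'})=0,$$ where $\mathcal{G}'$ runs over all induced subgraphs of $\mathcal{G}$. Let $\mathcal{G}_0=(\mathcal{V}_0,\mathcal{E}_0)$ be a minimal (with respect to inclusion) induced subgraph of $\mathcal{G}$ such that $\mathfrak{K}_{\mathcal{G}_0}(x|_{\mathcal{G}_0})=0$. Then $\mathcal{G}$ decomposes as the graph join of $\mathcal{G}_0$ with the complementary induced subgraph $\mathcal{G}_1$ on $\mathcal{V}\setminus\mathcal{V}_0$; i.e. every vertex of $\mathcal{V}\setminus\mathcal{V}_0$ is adjacent to every vertex of $\mathcal{V}_0$.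
   Context: Graphs are finite, simple, undirected. A clique is a set of pairwise adjacent vertices (the empty set is a clique). An induced subgraph $\mathcal{G}'$ has vertex set $\mathcal{V}'\subseteq\mathcal{V}$ and all edges of $\mathcal{G}$ between vertices of $\mathcal{V}'$; $x|_{\mathcal{G}'}=(x_v)_{v\in\mathcal{V}'}$. $\mathfrak{K}_{\mathcal{G}}(x)=\sum_{\mathcal{K}\subseteq\mathcal{V}\text{ clique}}(-1)^{|\mathcal{K}|}\prod_{v\in\mathcal{K}}x_v$, the empty clique contributing $1$. The graph join of graphs with disjoint vertex sets $\mathcal{V}_0,\mathcal{V}_1$ has vertex set $\mathcal{V}_0\sqcup\mathcal{V}_1$, two vertices adjacent iff adjacent within the same piece or lying in different pieces. *)

From mathcomp Require Import all_boot all_order all_algebra.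
Set Implicit Arguments. Unset Strict Implicit. Unset Printing Implicit Defensive.
Import Order.TTheory GRing.Theory Num.Theory.
Local Open Scope ring_scope.

Definition simple_graph (T : finType) (e : rel T) : Prop :=
  symmetric e /\ irreflexive e.

Definition is_clique (T : finType) (e : rel T) (K : {set T}) : bool :=
  [forall u in K, forall v in K, (u != v) ==> e u v].

(* Clique polynomial of the induced subgraph on vertex set A, evaluated at x|_A:
   sum over cliques K contained in A of (-1)^|K| prod_{v in K} x_v. *)
Definition clique_poly (R : ringType) (T : finType) (e : rel T) (A : {set T})
    (x : T -> R) : R :=
  \sum_(K : {set T} | (K \subset A) && is_clique e K)
     (-1) ^+ #|K| * \prod_(v in K) x v.

From mathcomp Require Import all_boot all_order all_algebra.
Import Order.TTheory GRing.Theory Num.Theory.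
Local Open Scope ring_scope.

(** Splitting the cliques of u |: A according to whether they contain u gives
    the deletion recurrence K(A + u) = K(A) - x_u K(A ∩ N(u)). If K(V0) = 0 and
    u lies outside V0, the recurrence yields K(V0 + u) = - x_u K(V0 ∩ N(u)), so
    nonnegativity of K on all induced subgraphs forces K(V0 ∩ N(u)) = 0, and
    minimality of V0 then forces V0 ∩ N(u) = V0. *)

Section CliquePolyRecurrence.

Variables (T : finType) (e : rel T).
Hypothesis e_sym : symmetric e.

Lemma cliqueP (K : {set T}) :
  reflect {in K &, forall a b, a != b -> e a b} (is_clique e K).
Proof.
apply: (iffP forallP) => [cK a b aK bK | cK a].
  by have /implyP/(_ aK)/forallP/(_ b)/implyP/(_ bK)/implyP := cK a.
by apply/implyP=> aK; apply/forallP=> b; apply/implyP=> bK; apply/implyP; apply: cK.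
Qed.

Lemma clique_setU1 (u : T) (K : {set T}) : u \notin K ->
  is_clique e (u |: K) = is_clique e K && (K \subset [set w | e u w]).
Proof.
move=> uK; apply/cliqueP/andP => [cUK | [/cliqueP cK /subsetP KNu]].
  split; first by apply/cliqueP=> a b aK bK; apply: cUK; rewrite setU1r.
  apply/subsetP=> w wK; rewrite inE cUK ?setU11 ?setU1r //.
  by apply: contraNneq uK => ->.
move=> a b; rewrite !in_setU1 => /predU1P[-> | aK] /predU1P[-> | bK].
- by rewrite eqxx.
- by move=> _; have := KNu b bK; rewrite inE.
- by move=> _; rewrite e_sym; have := KNu a aK; rewrite inE.
- exact: cK.
Qed.

Lemma subsetU1_notin (u : T) (A K : {set T}) :
  u \notin K -> (K \subset u |: A) = (K \subset A).
Proof.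
move=> uK; apply/subsetP/subsetP => KA w wK; last exact/setU1r/KA.
by have := KA w wK; rewrite in_setU1 => /predU1P[wu | //]; rewrite -wu wK in uK.
Qed.

Lemma clique_setU1_subset (u : T) (A K : {set T}) : u \notin K ->
  (u |: K \subset u |: A) && is_clique e (u |: K) =
  (K \subset A :&: [set w | e u w]) && is_clique e K.
Proof.
move=> uK; rewrite subUset sub1set setU11 subsetU1_notin // clique_setU1 //.
by rewrite subsetI /= andbAC andbA.
Qed.

Lemma clique_poly_setU1 (R : comNzRingType) (A : {set T}) (u : T) (x : T -> R) :
  u \notin A ->
  clique_poly e (u |: A) x =
  clique_poly e A x - x u * clique_poly e (A :&: [set w | e u w]) x.
Proof.
move=> uA; rewrite /clique_poly (bigID (fun K : {set T} => u \in K)) /= addrC.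
congr (_ + _).
  apply: eq_bigl => K; rewrite andbAC; case: (boolP (u \in K)) => uK.
    rewrite andbF /=; apply/esym/negbTE.
    by apply: contraNN uA => /andP[/subsetP/(_ u uK)].
  by rewrite andbT subsetU1_notin.
rewrite (reindex_onto (fun K => u |: K) (fun K => K :\ u)); last first.
  by move=> K /andP[_ uK]; rewrite setD1K.
rewrite mulr_sumr -sumrN; apply: eq_big => [K | K /andP[_ /eqP K_u]].
  rewrite setU11 andbT; case: (boolP (u \in K)) => uK.
    have -> : ((u |: K) :\ u == K) = false.
      by apply/negbTE; apply: contraTneq uK => <-; rewrite setD11.
    rewrite andbF; apply/esym/negbTE; apply: contraNN uA => /andP[/subsetP sK _].
    by have := sK u uK; rewrite inE => /andP[].
  by rewrite setU1K // eqxx andbT clique_setU1_subset.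
have uK : u \notin K by rewrite -K_u setD11.
by rewrite cardsU1 uK big_setU1 //= add1n exprS mulN1r mulNr mulrCA.
Qed.

End CliquePolyRecurrence.

Lemma clique_poly_nbhd_eq0 {R : numDomainType} {T : finType} {e : rel T}
    {x : T -> R} {V0 : {set T}} {u : T} :
  symmetric e -> 0 < x u -> (forall A : {set T}, 0 <= clique_poly e A x) ->
  clique_poly e V0 x = 0 -> u \notin V0 ->
  clique_poly e (V0 :&: [set w | e u w]) x = 0.
Proof.
move=> e_sym xu_gt0 K_ge0 K_V0 uV0; apply/eqP; rewrite eq_le K_ge0 andbT.
have := K_ge0 (u |: V0).
by rewrite clique_poly_setU1 // K_V0 sub0r oppr_ge0 pmulr_rle0.
Qed.

Theorem lemma4p5 (R : realFieldType) (T : finType) (e : rel T)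
  (x : T -> R) (V0 : {set T}) :
  simple_graph e ->
  (forall v, 0 < x v) ->
  (* min over induced subgraphs of the clique polynomial equals 0 *)
  (forall A : {set T}, 0 <= clique_poly e A x) ->
  (exists A : {set T}, clique_poly e A x = 0) ->
  (* G0 = induced subgraph on V0 is inclusion-minimal with vanishing clique polynomial *)
  clique_poly e V0 x = 0 ->
  (forall B : {set T}, B \proper V0 -> clique_poly e B x != 0) ->
  forall u v, u \notin V0 -> v \in V0 -> e u v.
Proof.
move=> [e_sym _] x_gt0 K_ge0 _ K_V0 V0_min u v uV0 vV0.
have K_nbhd := clique_poly_nbhd_eq0 e_sym (x_gt0 u) K_ge0 K_V0 uV0.
have : ~~ (V0 :&: [set w | e u w] \proper V0).
  by apply/negP => /V0_min; rewrite K_nbhd eqxx.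
rewrite properEneq subsetIl andbT negbK => /eqP nbhd_V0.
by move: vV0; rewrite -nbhd_V0 !inE => /andP[].
Qed.
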